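(* Let $l\ge1$, $n\in\mathbb N$ and $\Delta t>0$ with $\Delta t\,c_n<2$. Then for every initial condition $\rho_0\in B(\mathcal H_n)$ there exists $\rho_\infty\in B(\mathcal H_n)$ with $P_{\{l\}}\rho_\infty P_{\{l\}}=\rho_\infty$ such that $(\mathcal E_1^{\Delta t,n})^p(\rho_0)\to\rho_\infty$ as $p\to\infty$ at a geometric rate, where $P_{\{l\}}$ is the orthogonal projector onto $\mathrm{span}\{|k\rangle:0\le k\le l-1\}$.
   Context: Work in $\mathcal H=\ell^2(\mathbb N)$ with Fock basis $(|k\rangle)_{k\in\mathbb N}$ and annihilation operator $a|k+1\rangle=\sqrt{k+1}|k\rangle$, $a|0\rangle=0$. Fix $l\ge1$. For $n\in\mathbb N$, $\mathcal H_n=\mathrm{span}\{|k\rangle:0\le k\le n\}$ with orthogonal projector $P_n$, and $a^l_n=P_na^lP_n$. Set $c_k=\prod_{j=0}^{l-1}(k-j)$, so that $a^{l\dagger}_na^l_n|k\rangle=c_k|k\rangle$ for $0\le k\le n$. The first-order explicit Euler scheme for the Galerkin-truncated $l$-photon loss equation is $\mathcal E_1^{\Delta t,n}(\rho)=\rho+\Delta t\big(a^l_n\rho a^{l\dagger}_n-\tfrac12(a^{l\dagger}_na^l_n\rho+\rho a^{l\dagger}_na^l_n)\big)$ for $\rho\in B(\mathcal H_n)$. *)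

From HB Require Import structures.
From mathcomp Require Import all_boot all_order all_algebra.
From mathcomp Require Import complex.
From mathcomp Require Import reals.
Set Implicit Arguments. Unset Strict Implicit. Unset Printing Implicit Defensive.
Import Order.TTheory GRing.Theory Num.Theory.
Local Open Scope ring_scope.
Local Open Scope complex_scope.

(* c_k = prod_{j=0}^{l-1} (k - j).  With truncated nat subtraction this equals
   the integer product, since for k < l the factor j = k vanishes. *)
Definition cfac (l k : nat) : nat := (\prod_(j < l) (k - j))%N.

(* Matrix of a^l_n = P_n a^l P_n on H_n = span{|0>,...,|n>} (index i <-> |i>):
   a^l |j> = sqrt(c_j) |j - l> for j >= l and 0 otherwise, so
   <i| a^l_n |j> = sqrt(c_j) if i + l = j, and 0 otherwise. *)
Definition al_n (R : realType) (l n : nat) : 'M[R[i]]_n.+1 :=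
  \matrix_(i < n.+1, j < n.+1)
    (if (i + l == j)%N then (Num.sqrt ((cfac l j)%:R : R))%:C else 0).

Definition adjmx (R : realType) (m : nat) (A : 'M[R[i]]_m) : 'M[R[i]]_m :=
  map_mx (@conjc R) A^T.

Definition euler1 (R : realType) (l n : nat) (dt : R) (rho : 'M[R[i]]_n.+1)
  : 'M[R[i]]_n.+1 :=
  let A := al_n R l n in
  let AdA := adjmx A *m A in
  rho + dt%:C *: (A *m rho *m adjmx A
                  - (2%:R)^-1 *: (AdA *m rho + rho *m AdA)).

Definition Pl (R : realType) (l n : nat) : 'M[R[i]]_n.+1 :=
  \matrix_(i < n.+1, j < n.+1) (if (i == j) && (i < l)%N then 1 else 0).

From HB Require Import structures.
From mathcomp Require Import all_boot all_order all_algebra.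
From mathcomp Require Import complex.
From mathcomp Require Import reals classical_sets.
From mathcomp Require Import ring lra zify.
Set Implicit Arguments. Unset Strict Implicit. Unset Printing Implicit Defensive.
Import Order.TTheory Order.NatMonotonyTheory GRing.Theory Num.Theory.
Local Open Scope ring_scope.
Local Open Scope complex_scope.

(* Entrywise, the Euler step reads
     rho'(i, j) = (1 - dt (c_i + c_j) / 2) rho(i, j) + dt sqrt(c_(i+l) c_(j+l)) rho(i+l, j+l),
   so entry (i, j) is an affine recursion driven by entry (i+l, j+l).  Inside the
   block i, j < l the multiplier is 1 and the driving entry (which lies outside
   the block) decays geometrically, so entry (i, j) is a partial sum of a
   geometrically summable series and converges geometrically.  Outside the block
   c_i + c_j is an integer in [1, 2 c_n], so dt c_n < 2 makes the multiplier a
   strict contraction, and descending induction on i + j shows that the entry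
   tends to 0 geometrically. *)

Section GeometricConvergence.
Variable R : realType.
Local Notation normc := (@Normc.normc R).

Lemma normc_real (x : R) : normc x%:C = `|x|.
Proof. by rewrite /= expr0n addr0 sqrtr_sqr. Qed.

Lemma normc_ge0 (z : R[i]) : 0 <= normc z.
Proof. by case: z => a b /=; rewrite sqrtr_ge0. Qed.

Lemma normc_le_ReIm (z : R[i]) : normc z <= `|complex.Re z| + `|complex.Im z|.
Proof.
case: z => a b /=.
rewrite -[X in _ <= X]ger0_norm ?addr_ge0 // -sqrtr_sqr ler_sqrt ?sqr_ge0 //.
rewrite -[a ^+ 2]real_normK ?num_real // -[b ^+ 2]real_normK ?num_real //.
have : 0 <= `|a| * `|b| by rewrite mulr_ge0.
move: `|a| `|b| => u v h; rewrite sqrrD -mulr_natr; lra.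
Qed.

Lemma Re_le_normc (z : R[i]) : `|complex.Re z| <= normc z.
Proof.
case: z => a b /=; rewrite -sqrtr_sqr ler_sqrt ?addr_ge0 ?sqr_ge0 //.
by rewrite lerDl sqr_ge0.
Qed.

Lemma Im_le_normc (z : R[i]) : `|complex.Im z| <= normc z.
Proof.
case: z => a b /=; rewrite -sqrtr_sqr ler_sqrt ?addr_ge0 ?sqr_ge0 //.
by rewrite lerDr sqr_ge0.
Qed.

(* With [M = K / (1 - q)], [a p - M q^p] increases, [a p + M q^p] decreases,
   and both squeeze the supremum of the former. *)
Lemma real_geom_cauchy (a : nat -> R) (K q : R) : 0 <= K -> 0 <= q -> q < 1 ->
  (forall p, `|a p.+1 - a p| <= K * q ^+ p) ->
  exists L, forall p, `|a p - L| <= K / (1 - q) * q ^+ p.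
Proof.
move=> K0 q0 q1 da; set M := K / (1 - q).
have MK p : M * q ^+ p.+1 = M * q ^+ p - K * q ^+ p.
  by rewrite /M exprS; field; rewrite subr_eq0 gt_eqF.
have M0 : 0 <= M by rewrite divr_ge0 // subr_ge0 ltW.
pose b p := a p - M * q ^+ p; pose c p := a p + M * q ^+ p.
have b_incr : forall m p, (m <= p)%N -> b m <= b p.
  apply: nondecnP => p; have := da p; rewrite /b MK ler_norml; lra.
have c_decr : forall m p, (m <= p)%N -> c p <= c m.
  move=> m p; apply: (nonincnP (f := c)) => {}p; have := da p; rewrite /c MK ler_norml; lra.
have le_bc m p : b m <= c p.
  have bc_diag : b (maxn m p) <= c (maxn m p).
    by rewrite /b /c; have := mulr_ge0 M0 (exprn_ge0 (maxn m p) q0); lra.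
  exact: le_trans (b_incr _ _ (leq_maxl m p)) (le_trans bc_diag (c_decr _ _ (leq_maxr m p))).
pose E r := exists p, r = b p.
have hasubE : has_ubound E by exists (c 0%N) => _ [m ->].
exists (sup E) => p.
have : b p <= sup E by apply: ub_le_sup; last by exists p.
have : sup E <= c p by apply: ge_sup; [exists (b 0%N), 0%N | move=> _ [m ->]].
by rewrite /b /c ler_norml => ? ?; apply/andP; split; lra.
Qed.

Definition geom_cvg (x : nat -> R[i]) (L : R[i]) (q : R) :=
  exists2 C : R, 0 <= C & forall p, normc (x p - L) <= C * q ^+ p.

Lemma geom_cauchy (x : nat -> R[i]) (K q : R) : 0 <= K -> 0 <= q -> q < 1 ->
  (forall p, normc (x p.+1 - x p) <= K * q ^+ p) -> exists L, geom_cvg x L q.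
Proof.
move=> K0 q0 q1 dx.
have [La HLa] := @real_geom_cauchy (fun p => complex.Re (x p)) K q K0 q0 q1
  (fun p => ltac:(rewrite -raddfB; exact: le_trans (Re_le_normc _) (dx p))).
have [Lb HLb] := @real_geom_cauchy (fun p => complex.Im (x p)) K q K0 q0 q1
  (fun p => ltac:(rewrite -raddfB; exact: le_trans (Im_le_normc _) (dx p))).
exists (La +i* Lb), (2 * (K / (1 - q))) => [|p].
  by rewrite mulr_ge0 // divr_ge0 // subr_ge0 ltW.
apply: le_trans (normc_le_ReIm _) _; rewrite !raddfB /= -mulrA.
by move: (HLa p) (HLb p); move: (K / _ * _) => M; lra.
Qed.

Lemma geom_cvg0_scale (a : R[i]) (x : nat -> R[i]) (q : R) :
  geom_cvg x 0 q -> geom_cvg (fun p => a * x p) 0 q.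
Proof.
case=> C C0 hx; exists (normc a * C) => [|p]; first by rewrite mulr_ge0 ?normc_ge0.
by rewrite !subr0 Normc.normcM -mulrA ler_wpM2l ?normc_ge0 // -(subr0 (x p)).
Qed.

Lemma increment_geom_cvg (x t : nat -> R[i]) (q : R) : 0 <= q -> q < 1 ->
  (forall p, x p.+1 = x p + t p) -> geom_cvg t 0 q -> exists L, geom_cvg x L q.
Proof.
move=> q0 q1 xS [C C0 ht]; apply: (@geom_cauchy x C q C0 q0 q1) => p.
by rewrite xS addrAC subrr add0r -(subr0 (t p)).
Qed.

(* Comparison with [C q^p], where [C] is chosen so that [q0 C + D <= q C]. *)
Lemma contraction_geom_cvg0 (a : R[i]) (x t : nat -> R[i]) (q0 q : R) :
  normc a <= q0 -> q0 < q -> (forall p, x p.+1 = a * x p + t p) ->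
  geom_cvg t 0 q -> geom_cvg x 0 q.
Proof.
move=> aq0 q0q xS [D D0 ht].
have q00 : 0 <= q0 := le_trans (normc_ge0 a) aq0.
have qq0 : 0 < q - q0 by rewrite subr_gt0.
have x00 := normc_ge0 (x 0%N).
set C := normc (x 0%N) + D / (q - q0).
have CD : q0 * C + D <= q * C.
  have -> : q * C = q0 * C + D + normc (x 0%N) * (q - q0).
    by rewrite /C; field; rewrite gt_eqF.
  by have := mulr_ge0 x00 (ltW qq0); lra.
have C0 : 0 <= C by rewrite addr_ge0 // divr_ge0 // ltW.
exists C => // p; rewrite subr0; elim: p => [|p IH].
  by rewrite expr0 mulr1 /C; have := divr_ge0 D0 (ltW qq0); lra.
have qp : 0 <= q ^+ p by rewrite exprn_ge0 // ltW // (le_lt_trans q00).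
have := ht p; rewrite subr0 => htp.
rewrite xS; apply: le_trans (le_normcD _ _) _; rewrite Normc.normcM exprS.
have : normc a * normc (x p) <= q0 * (C * q ^+ p).
  by apply: ler_pM => //; apply: normc_ge0.
have : (q0 * C + D) * q ^+ p <= q * C * q ^+ p by rewrite ler_wpM2r.
have -> : (q0 * C + D) * q ^+ p = q0 * (C * q ^+ p) + D * q ^+ p by ring.
have -> : q * C * q ^+ p = C * (q * q ^+ p) by ring.
move: (normc a * _) => u; lra.
Qed.

Lemma mx_geom_cvg (m n : nat) (X : nat -> 'M[R[i]]_(m, n)) (L : 'M[R[i]]_(m, n)) (q : R) :
  0 <= q -> (forall i j, geom_cvg (fun p => X p i j) (L i j) q) ->
  exists2 K, 0 <= K & forall p i j, `|(X p - L) i j| <= (K * q ^+ p)%:C.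
Proof.
move=> q0 hX.
have /fin_all_exists [C HC] : forall ij : 'I_m * 'I_n, exists C : R, 0 <= C /\
    forall p, normc (X p ij.1 ij.2 - L ij.1 ij.2) <= C * q ^+ p.
  by move=> [i j]; have [C ? ?] := hX i j; exists C.
exists (\sum_ij C ij) => [|p i j]; first by apply: sumr_ge0 => ij _; case: (HC ij).
rewrite !mxE [`|_|]/= lecR; have [_ /(_ p) /= hij] := HC (i, j).
apply: le_trans hij (ler_wpM2r (exprn_ge0 _ q0) _).
by rewrite (bigD1 (i, j)) //= lerDl sumr_ge0 // => ij _; case: (HC ij).
Qed.

End GeometricConvergence.

Lemma cfac_eq0 (l k : nat) : (k < l)%N -> cfac l k = 0%N.
Proof. by move=> kl; rewrite /cfac (bigD1 (Ordinal kl)) //= subnn. Qed.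

Lemma cfac_gt0 (l k : nat) : (l <= k)%N -> (0 < cfac l k)%N.
Proof.
by move=> lk; rewrite prodn_gt0 // => j; rewrite subn_gt0 (leq_trans (ltn_ord j)).
Qed.

Lemma leq_cfac (l k m : nat) : (k <= m)%N -> (cfac l k <= cfac l m)%N.
Proof. by move=> km; apply: leq_prod => j _; apply: leq_sub2r. Qed.

Lemma sum_if_addn_eq (R : nmodType) (N l k : nat) (F : 'I_N.+1 -> R) :
  \sum_(t < N.+1) (if (t + l == k)%N then F t else 0) =
  if (l <= k)%N && (k - l < N.+1)%N then F (inord (k - l)) else 0.
Proof.
rewrite -big_mkcond /=; case: ifP => [/andP[lk klN] | hk].
  rewrite (big_pred1 (inord (k - l))) // => t /=.
  by rewrite -(inj_eq val_inj) /= inordK //; apply/eqP/eqP => [<- | ->];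
    rewrite ?addnK ?subnK.
apply: big_pred0 => t; apply/negbTE/eqP => tlk.
by move: hk; rewrite -tlk leq_addl addnK ltn_ord.
Qed.

Lemma sum_if_eq (R : nmodType) (N k : nat) (F : 'I_N.+1 -> R) :
  \sum_(t < N.+1) (if (k == t)%N then F t else 0) =
  if (k < N.+1)%N then F (inord k) else 0.
Proof.
under eq_bigr => t _ do rewrite eq_sym -[X in (X == k)%N]addn0.
by rewrite sum_if_addn_eq subn0.
Qed.

Section EulerEntries.
Variables (R : realType) (l n : nat).
Local Notation A := (al_n R l n).
Local Notation s k := (Num.sqrt ((cfac l k)%:R : R)).
Local Notation c k := ((cfac l k)%:R : R).

Lemma mul_al_n (rho : 'M[R[i]]_n.+1) i j :
  (A *m rho) i j = if (i + l < n.+1)%N then (s (i + l))%:C * rho (inord (i + l)) j else 0.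
Proof.
rewrite mxE; under eq_bigr => k _ do rewrite mxE (fun_if (fun z => z * rho k j)) mul0r.
by rewrite sum_if_eq; case: ifP => // ?; rewrite inordK.
Qed.

Lemma adj_al_nE (k j : 'I_n.+1) :
  adjmx A k j = if (j + l == k)%N then (s k)%:C else 0.
Proof. by rewrite !mxE (fun_if (@conjc _)) conjc_real conjc0. Qed.

Lemma mul_adj_al_n (rho : 'M[R[i]]_n.+1) i j :
  (rho *m adjmx A) i j = if (j + l < n.+1)%N then rho i (inord (j + l)) * (s (j + l))%:C else 0.
Proof.
rewrite mxE; under eq_bigr => k _ do rewrite adj_al_nE (fun_if (fun z => rho i k * z)) mulr0.
by rewrite sum_if_eq; case: ifP => // ?; rewrite inordK.
Qed.

Lemma adj_al_n_mul_al_n : adjmx A *m A = diag_mx (\row_k (c k)%:C).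
Proof.
apply/matrixP => k m; rewrite !mxE.
under eq_bigr => t _ do rewrite adj_al_nE mxE (fun_if (fun z => z * _)) mul0r.
rewrite sum_if_addn_eq (leq_ltn_trans (leq_subr _ _) (ltn_ord k)) andbT.
case: leqP => [lk | /cfac_eq0 ->]; last by rewrite mul0rn.
rewrite inordK ?subnK ?(leq_ltn_trans (leq_subr _ _) (ltn_ord k)) //.
rewrite (inj_eq val_inj); case: eqP => [<- | _]; last by rewrite mulr0.
by rewrite mulr1n -rmorphM -expr2 sqr_sqrtr.
Qed.

Lemma conj_al_nE (rho : 'M[R[i]]_n.+1) i j :
  (A *m rho *m adjmx A) i j =
  if (i + l < n.+1)%N && (j + l < n.+1)%N then
    (s (i + l) * s (j + l))%:C * rho (inord (i + l)) (inord (j + l))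
  else 0.
Proof.
rewrite mul_adj_al_n mul_al_n.
by case: (i + l < n.+1)%N; case: (j + l < n.+1)%N; rewrite ?mul0r // rmorphM mulrAC.
Qed.

Definition euler_diag (dt : R) (i j : nat) : R := 1 - dt * (c i + c j) / 2.

Definition euler_shift (dt : R) (rho : 'M[R[i]]_n.+1) (i j : nat) : R[i] :=
  if (i + l < n.+1)%N && (j + l < n.+1)%N then
    (dt * (s (i + l) * s (j + l)))%:C * rho (inord (i + l)) (inord (j + l))
  else 0.

Lemma euler1E (dt : R) (rho : 'M[R[i]]_n.+1) i j :
  euler1 l dt rho i j = (euler_diag dt i j)%:C * rho i j + euler_shift dt rho i j.
Proof.
rewrite /euler1 /= adj_al_n_mul_al_n mul_diag_mx mul_mx_diag.
rewrite 3!mxE conj_al_nE !mxE /euler_shift /euler_diag.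
case: ifP => _; rewrite ?mulr0 ?addr0 ?subr0;
  rewrite !(rmorphB, rmorphM, rmorphD, rmorph1, fmorphV, rmorph_nat) /=; ring.
Qed.

End EulerEntries.

(* The smallest [q0 >= 0] with [|1 - dt S / 2| <= q0] for all [S] in [[1, 2 c_n]]. *)
Definition euler_contraction (R : realType) (l n : nat) (dt : R) : R :=
  Num.max 0 (Num.max (1 - dt / 2) (dt * (cfac l n)%:R - 1)).

Definition euler_rate (R : realType) (l n : nat) (dt : R) : R :=
  (1 + euler_contraction l n dt) / 2.

Section EulerConvergence.
Variables (R : realType) (l n : nat) (dt : R).
Hypotheses (l_gt0 : (0 < l)%N) (dt_gt0 : 0 < dt) (dt_cn : dt * (cfac l n)%:R < 2).
Local Notation q0 := (euler_contraction l n dt).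
Local Notation q := (euler_rate l n dt).
Local Notation normc := (@Normc.normc R).

Lemma euler_contraction_ge0 : 0 <= q0.
Proof. by rewrite le_max lexx. Qed.

Lemma euler_contraction_lt1 : q0 < 1.
Proof.
rewrite !gt_max ltr01 /=; apply/andP; split; [move: dt_gt0 | move: dt_cn]; lra.
Qed.

Lemma euler_contraction_lt_rate : q0 < q.
Proof. by rewrite /euler_rate; have := euler_contraction_lt1; lra. Qed.

Lemma euler_rate_ge0 : 0 <= q.
Proof. by rewrite /euler_rate; have := euler_contraction_ge0; lra. Qed.

Lemma euler_rate_lt1 : q < 1.
Proof. by rewrite /euler_rate; have := euler_contraction_lt1; lra. Qed.

Lemma euler_diag_block (i j : nat) : (i < l)%N -> (j < l)%N -> euler_diag l dt i j = 1.
Proof. by move=> il jl; rewrite /euler_diag !cfac_eq0 // addr0 mulr0 mul0r subr0. Qed.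

Lemma normc_euler_diag (i j : 'I_n.+1) :
  ~~ ((i < l) && (j < l))%N -> normc (euler_diag l dt i j)%:C <= q0.
Proof.
move=> out; rewrite normc_real /euler_diag.
have S_ge1 : 1 <= ((cfac l i)%:R + (cfac l j)%:R : R).
  move: out; rewrite negb_and -!leqNgt -natrD ler1n addn_gt0.
  by case/orP => /cfac_gt0 ->; rewrite ?orbT.
have S_le : ((cfac l i)%:R + (cfac l j)%:R : R) <= 2 * (cfac l n)%:R.
  by rewrite mulr_natl mulr2n -!natrD ler_nat leq_add // leq_cfac // -ltnS.
have : 1 - dt / 2 <= q0 by rewrite /euler_contraction !le_max lexx !orbT.
have : dt * (cfac l n)%:R - 1 <= q0 by rewrite /euler_contraction !le_max lexx !orbT.
move: S_ge1 S_le; move: (_ + _) (cfac l n)%:R => S cn S_ge1 S_le.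
have : dt <= dt * S by rewrite ler_peMr // ltW.
have : dt * S <= 2 * (dt * cn) by rewrite mulrCA ler_wpM2l // ltW.
by rewrite ler_norml => *; apply/andP; split; lra.
Qed.

Variable rho0 : 'M[R[i]]_n.+1.
Local Notation X p := (iter p (euler1 l dt) rho0).

Lemma euler_entry_geom_cvg (i j : 'I_n.+1) :
  exists L, (~~ ((i < l) && (j < l))%N -> L = 0) /\ geom_cvg (fun p => X p i j) L q.
Proof.
suff: forall m (i j : 'I_n.+1), (2 * n < i + j + m)%N ->
    exists L, (~~ ((i < l) && (j < l))%N -> L = 0) /\ geom_cvg (fun p => X p i j) L q.
  by move=> entry; apply: (entry (2 * n).+1); lia.
elim=> [|m IH] {}i {}j ij_big; first by have := ltn_ord i; have := ltn_ord j; lia.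
have shift_cvg : geom_cvg (fun p => euler_shift l dt (X p) i j) 0 q.
  rewrite /euler_shift; case: andP => [[il jl] | _]; last first.
    by exists 0 => // p; rewrite subr0 Normc.normc0 mul0r.
  have [|L [L0 cvg]] := IH (inord (i + l)) (inord (j + l)); first by rewrite !inordK //; lia.
  rewrite L0 in cvg; last by rewrite !inordK // ltnNge leq_addl.
  exact: geom_cvg0_scale.
have XS p : X p.+1 i j = (euler_diag l dt i j)%:C * X p i j + euler_shift l dt (X p) i j.
  by rewrite iterS euler1E.
case: (boolP ((i < l) && (j < l))%N) => [/andP[il jl] | out].
  have [L cvg] : exists L, geom_cvg (fun p => X p i j) L q.
    apply: increment_geom_cvg euler_rate_ge0 euler_rate_lt1 _ shift_cvg => p.
    by rewrite XS euler_diag_block // mul1r.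
  by exists L.
exists 0; split => //.
exact: contraction_geom_cvg0 (normc_euler_diag out) euler_contraction_lt_rate XS shift_cvg.
Qed.

End EulerConvergence.

Lemma Pl_diag (R : realType) (l n : nat) :
  Pl R l n = diag_mx (\row_k ((k < l)%N)%:R).
Proof.
apply/matrixP => a b; rewrite !mxE.
by case: (a =P b) => [-> | _] /=; [case: (b < l)%N | rewrite mulr0n].
Qed.

Lemma Pl_mul_block (R : realType) (l n : nat) (M : 'M[R[i]]_n.+1) :
  (forall i j : 'I_n.+1, ~~ ((i < l) && (j < l))%N -> M i j = 0) ->
  Pl R l n *m M *m Pl R l n = M.
Proof.
move=> M_out; apply/matrixP => a b; rewrite Pl_diag mul_diag_mx mul_mx_diag !mxE.
case al: (a < l)%N; case bl: (b < l)%N; rewrite ?mul1r ?mulr1 ?mul0r ?mulr0 //.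
all: by rewrite M_out // al bl.
Qed.

Theorem mainTheorem11 (R : realType) (l n : nat) (dt : R) :
  (1 <= l)%N -> 0 < dt -> dt * (cfac l n)%:R < 2%:R ->
  forall rho0 : 'M[R[i]]_n.+1,
  exists rhoinf : 'M[R[i]]_n.+1,
    Pl R l n *m rhoinf *m Pl R l n = rhoinf /\
    exists (K q : R), 0 <= K /\ 0 <= q /\ q < 1 /\
      forall (p : nat) (i j : 'I_n.+1),
        `|(iter p (euler1 l dt) rho0 - rhoinf) i j| <= (K * q ^+ p)%:C.
Proof.
move=> l_gt0 dt_gt0 dt_cn rho0.
have /fin_all_exists [L HL] := fun ij : 'I_n.+1 * 'I_n.+1 =>
  euler_entry_geom_cvg l_gt0 dt_gt0 dt_cn rho0 ij.1 ij.2.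
pose rhoinf := \matrix_(i, j) L (i, j).
exists rhoinf; split.
  by apply: Pl_mul_block => i j out; rewrite mxE; case: (HL (i, j)) => /(_ out).
have entry_cvg i j : geom_cvg (fun p => iter p (euler1 l dt) rho0 i j) (rhoinf i j)
    (euler_rate l n dt) by rewrite mxE; case: (HL (i, j)).
have [K K_ge0 cvgK] := mx_geom_cvg (@euler_rate_ge0 _ l n dt) entry_cvg.
exists K, (euler_rate l n dt); split=> //; split; first exact: euler_rate_ge0.
by split; first exact: euler_rate_lt1.
Qed.
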